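(* Let $G$ be a partial cube in which every convex cycle is a $4$-cycle, and let $P=v_0v_1\cdots v_l$ ($l\geqslant 1$) be a path in $G$. If $P$ is of type-I, then $P$ is a shortest $v_0,v_l$-path (geodesic) in $G$.
   Context: A partial cube is a connected graph isomorphic to an isometric subgraph of a hypercube. A subgraph $H$ is convex if for all $u,v\in V(H)$ every shortest $u,v$-path of $G$ lies in $H$; a convex cycle is a cycle that is a convex subgraph. The Djoković–Winkler relation $\Theta$ on edges: $uv\,\Theta\,xy$ iff $d(u,x)+d(v,y)\neq d(u,y)+d(v,x)$; in a partial cube it is an equivalence relation, and $F_e$ denotes the $\Theta$-class of edge $e$. For a vertex $v$, $\mathcal{F}(v)=\{F_e: e \text{ is an edge incident with } v\}$. With $e_i=v_{i-1}v_i$ ($1\leqslant i\leqslant l$), the path $P=v_0v_1\cdots v_l$ ($l\geqslant 1$) is of type-I if $\mathcal{F}(v_0)\setminus\mathcal{F}(v_1)\neq\emptyset$, $\mathcal{F}(v_l)\setminus\mathcal{F}(v_{l-1})\neq\emptyset$, and for every $1\leqslant i\leqslant l-1$: $F_{e_{i+1}}\notin\mathcal{F}(v_{i-1})$ and $F_{e_i}\notin\mathcal{F}(v_{i+1})$. *)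

From mathcomp Require Import all_boot.
Set Implicit Arguments. Unset Strict Implicit. Unset Printing Implicit Defensive.

(* A finite simple graph: vertex type T : finType, adjacency e : rel T,
   assumed symmetric and irreflexive (hypotheses in the theorem). *)

Section Graph.
Variables (T : finType) (e : rel T).

Definition walkn (u v : T) (n : nat) : bool :=
  [exists t : n.-tuple T, path e u t && (last u t == v)].

(* graph distance: least n with a walk of length n from u to v
   (shortest walks have < #|T| edges; equals #|T| iff v unreachable) *)
Definition dist (u v : T) : nat := find (walkn u v) (iota 0 #|T|).

Definition connected : Prop := forall u v : T, connect e u v.

Definition shortest_path (u : T) (p : seq T) (v : T) : Prop :=
  path e u p /\ last u p = v /\ size p = dist u v.

Definition theta (f g : T * T) : bool :=
  dist f.1 g.1 + dist f.2 g.2 != dist f.1 g.2 + dist f.2 g.1.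

(* F_f \in F(w): some edge incident with w is Theta-related to f *)
Definition inF (f : T * T) (w : T) : bool :=
  [exists w', e w w' && theta (w, w') f].

Definition is_cycle (c : seq T) : Prop :=
  [/\ uniq c, 3 <= size c & cycle e c].

Definition cycle_edge (c : seq T) (x y : T) : bool :=
  (x \in c) && (y \in c) && ((next c x == y) || (next c y == x)).

Definition convex_cycle (c : seq T) : Prop :=
  is_cycle c /\
  forall u v p, u \in c -> v \in c -> shortest_path u p v ->
    all (fun x => x \in c) (u :: p) /\ path (cycle_edge c) u p.

Definition qadj (n : nat) : rel {ffun 'I_n -> bool} :=
  fun x y => #|[pred i | x i != y i]| == 1.

End Graph.

Definition partial_cube (T : finType) (e : rel T) : Prop :=
  connected e /\
  exists (n : nat) (f : T -> {ffun 'I_n -> bool}),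
    forall u v, dist e u v = dist (@qadj n) (f u) (f v).

Definition typeI (T : finType) (e : rel T) (v0 : T) (p : seq T) : Prop :=
  let l := size p in
  let v := fun i => nth v0 (v0 :: p) i in
  [/\ exists w, e (v 0) w && ~~ inF e (v 0, w) (v 1),
      exists w, e (v l) w && ~~ inF e (v l, w) (v l.-1)
    & forall i, 1 <= i <= l.-1 ->
        ~~ inF e (v i, v i.+1) (v i.-1) /\ ~~ inF e (v i.-1, v i) (v i.+1)].

From mathcomp Require Import all_boot zify.
Set Implicit Arguments. Unset Strict Implicit. Unset Printing Implicit Defensive.

(* Embed G isometrically into a hypercube. Each edge of P flips one coordinate, the
   Theta-classes being exactly these coordinate classes, so P is a geodesic iff the
   flipped coordinates are pairwise distinct, and the type-I condition says that no
   two consecutive edges of P span a square of G. If a coordinate repeats, the stretch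
   of P up to its first repetition is a "bridge" of some length k. By induction on k:
   a bridge has no shortcuts (one would yield a shorter bridge), hence can be rotated,
   and repeating its coordinates periodically closes it into a convex cycle of length
   2k of G. Bridges of length at most 2 are impossible outright, so 2k >= 6, against
   the hypothesis that all convex cycles are 4-cycles. *)

Section Hypercube.
Variable n : nat.
Local Notation code := {ffun 'I_n -> bool}.

Definition flip (i : 'I_n) (x : code) : code := [ffun j => x j (+) (j == i)].
Definition hamming (x y : code) : nat := #|[pred i | x i != y i]|.

Lemma flipE i x j : flip i x j = x j (+) (j == i).
Proof. by rewrite ffunE. Qed.

Lemma flipK i : involutive (flip i).
Proof. by move=> x; apply/ffunP=> j; rewrite !flipE -addbA addbb addbF. Qed.

Lemma flipC i j x : flip i (flip j x) = flip j (flip i x).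
Proof. by apply/ffunP=> l; rewrite !flipE -!addbA (addbC (l == j)). Qed.

Lemma hammingE x y : hamming x y = \sum_i (x i != y i).
Proof.
rewrite /hamming -sum1_card big_mkcond /=; apply: eq_bigr => i _.
by rewrite inE; case: (x i != y i).
Qed.

Lemma hammingC x y : hamming x y = hamming y x.
Proof. by rewrite !hammingE; apply: eq_bigr => i _; rewrite eq_sym. Qed.

Lemma hamming_eq0 x y : (hamming x y == 0) = (x == y).
Proof.
apply/idP/eqP => [/eqP/card0_eq x_y|->]; last first.
  by apply/eqP/eq_card0 => i; rewrite inE eqxx.
by apply/ffunP => i; have := x_y i; rewrite inE => /negbFE/eqP.
Qed.

Lemma hammingxx x : hamming x x = 0.
Proof. by apply/eqP; rewrite hamming_eq0. Qed.

Lemma hamming_triangle x y z : hamming x z <= hamming x y + hamming y z.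
Proof.
rewrite !hammingE -big_split /=; apply: leq_sum => i _.
by case: (x i) (y i) (z i) => [] [] [].
Qed.

Lemma hamming_detour (x y z : code) i : x i = z i -> y i != x i ->
  (hamming x z).+2 <= hamming x y + hamming y z.
Proof.
move=> xz_i yx_i; rewrite !hammingE -big_split /= (bigD1 i) //=.
rewrite [X in _ <= X](bigD1 i) //= xz_i eqxx /= -xz_i eq_sym yx_i /=.
rewrite -addSn -add2n; apply: leq_add => //.
by apply: leq_sum => j _; case: (x j) (y j) (z j) => [] [] [].
Qed.

Lemma hamming_flip_agree (x y : code) i : x i = y i ->
  hamming x (flip i y) = (hamming x y).+1.
Proof.
move=> xy_i; rewrite !hammingE (bigD1 i) //= [in RHS](bigD1 i) //= flipE eqxx xy_i.
case: (y i) => /=; rewrite add1n; congr S; apply: eq_bigr => j /negbTE ji;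
by rewrite flipE ji addbF.
Qed.

Lemma hamming_flip_disagree (x y : code) i : x i != y i ->
  (hamming x (flip i y)).+1 = hamming x y.
Proof.
move=> xy_i; rewrite !hammingE (bigD1 i) //= [in RHS](bigD1 i) //= flipE eqxx xy_i.
move: xy_i; case: (x i) (y i) => [] [] //= _; rewrite !add0n add1n; congr S;
by apply: eq_bigr => j /negbTE ji; rewrite flipE ji addbF.
Qed.

Lemma hamming_flip x i : hamming x (flip i x) = 1.
Proof. by rewrite hamming_flip_agree // hammingxx. Qed.

Lemma hamming_flip2 i x y : hamming (flip i x) (flip i y) = hamming x y.
Proof.
rewrite !hammingE; apply: eq_bigr => j _; rewrite !flipE.
by case: (x j) (y j) (j == i) => [] [] [].
Qed.

Lemma hamming1_flip x y : hamming x y = 1 -> exists i, y = flip i x.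
Proof.
move=> xy1; case: (pickP [pred i | x i != y i]) => [i /= xy_i|x_y]; last first.
  by move: xy1; rewrite /hamming eq_card0 // => j; rewrite !inE x_y.
exists i; have := hamming_flip_disagree xy_i; rewrite xy1 => -[] /eqP.
by rewrite hamming_eq0 => /eqP ->; rewrite flipK.
Qed.

Lemma hamming_le_dim x y : hamming x y <= n.
Proof. by apply: leq_trans (max_card _) _; rewrite card_ord. Qed.

End Hypercube.

Section Distance.
Variables (T : finType) (e : rel T).

Lemma walknP u v m :
  reflect (exists p, [/\ path e u p, last u p = v & size p = m]) (walkn e u v m).
Proof.
apply: (iffP existsP) => [[t /andP [t_path /eqP t_last]]|[p [p_path p_last p_size]]].
  by exists t; rewrite size_tuple.
have p_size' : size p == m by rewrite p_size.
by exists (Tuple p_size') => /=; rewrite p_path p_last eqxx.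
Qed.

Lemma dist_path_le u p : path e u p -> dist e u (last u p) <= size p.
Proof.
move=> p_path; rewrite /dist; case: (ltnP (size p) #|T|) => p_small; last first.
  by apply: leq_trans (find_size _ _) _; rewrite size_iota.
rewrite leqNgt; apply/negP => /(before_find 0).
rewrite nth_iota // add0n => /negbT /negP; apply; apply/walknP; by exists p.
Qed.

Lemma dist_shortest_path u v : dist e u v < #|T| ->
  exists p, [/\ path e u p, last u p = v & size p = dist e u v].
Proof.
rewrite /dist => duv_small; apply/walknP.
have : has (walkn e u v) (iota 0 #|T|) by rewrite has_find size_iota.
by move/(nth_find 0); rewrite nth_iota.
Qed.

Lemma connect_dist_lt u v : connect e u v -> dist e u v < #|T|.
Proof.
move=> /connectP [p p_path ->]; case: (shortenP p_path) => q q_path q_uniq _.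
apply: leq_ltn_trans (dist_path_le q_path) _.
by have /card_uniqP /= <- := q_uniq; apply: max_card.
Qed.

Lemma dist0_eq u v : dist e u v = 0 -> u = v.
Proof.
move=> duv0; have duv_small : dist e u v < #|T| by rewrite duv0; apply/card_gt0P; exists u.
have [p [_ p_last p_size]] := dist_shortest_path duv_small.
by rewrite duv0 in p_size; case: p p_size p_last => //= _ <-.
Qed.

Lemma dist_edge u v : u != v -> e u v -> dist e u v = 1.
Proof.
move=> u_neq_v uv; apply/eqP; rewrite eqn_leq (dist_path_le (p := [:: v])) /= ?uv //.
by rewrite lt0n; apply: contra u_neq_v => /eqP/dist0_eq ->.
Qed.

Lemma dist1_edge u v : dist e u v = 1 -> 1 < #|T| -> e u v.
Proof.
move=> duv1 T_big; have duv_small : dist e u v < #|T| by rewrite duv1.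
have [[|x [|y p]] [/= uxp x_last]] := dist_shortest_path duv_small; rewrite duv1 // => _.
by move: uxp; rewrite -x_last andbT.
Qed.

End Distance.

Section HypercubeDistance.
Variable n : nat.
Local Notation code := {ffun 'I_n -> bool}.

Lemma qpath_hamming_le (x : code) p :
  path (@qadj n) x p -> hamming x (last x p) <= size p.
Proof.
elim: p x => [|y p IH] x /=; first by rewrite hammingxx.
move=> /andP [/eqP xy1 y_path]; apply: leq_trans (hamming_triangle x y _) _.
by rewrite [hamming x y]xy1 add1n ltnS IH.
Qed.

Lemma qpath_hamming (x y : code) :
  exists p, [/\ path (@qadj n) x p, last x p = y & size p = hamming x y].
Proof.
move xy_h : (hamming x y) => h; elim: h x xy_h => [|h IH] x xy_h.
  by exists [::]; move/eqP: xy_h; rewrite hamming_eq0 => /eqP ->.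
case: (pickP [pred i | x i != y i]) => [i /= xy_i|x_y]; last first.
  by move: xy_h; rewrite /hamming eq_card0 // => j; rewrite !inE x_y.
have yx_i : y i != x i by rewrite eq_sym.
have := hamming_flip_disagree yx_i; rewrite [hamming y x]hammingC xy_h hammingC.
move=> -[] /IH [p [p_path p_last p_size]]; exists (flip i x :: p).
by split; rewrite //= ?p_size // p_path andbT /qadj -/(hamming _ _) hamming_flip.
Qed.

Lemma dist_qadj (x y : code) : dist (@qadj n) x y = hamming x y.
Proof.
have [p [p_path p_last p_size]] := qpath_hamming x y.
apply/eqP; rewrite eqn_leq -{1}p_size -{1}p_last dist_path_le //=.
rewrite leqNgt; apply/negP => short.
have small : dist (@qadj n) x y < #|code|.
  apply: leq_trans short (leq_trans (hamming_le_dim x y) _).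
  by rewrite card_ffun card_bool card_ord ltnW // ltn_expl.
have [q [q_path q_last q_size]] := dist_shortest_path small.
by have := qpath_hamming_le q_path; rewrite q_last q_size leqNgt short.
Qed.

End HypercubeDistance.

Section IsometricEmbedding.
Variables (T : finType) (e : rel T) (n : nat) (f : T -> {ffun 'I_n -> bool}).
Local Notation code := {ffun 'I_n -> bool}.
Hypothesis e_irr : irreflexive e.
Hypothesis e_conn : connected e.
Hypothesis f_iso : forall u v, dist e u v = hamming (f u) (f v).

Lemma isometry_inj : injective f.
Proof. by move=> u v fuv; apply: (dist0_eq (e := e)); rewrite f_iso fuv hammingxx. Qed.

Lemma edge_hamming u v : e u v -> hamming (f u) (f v) = 1.
Proof.
move=> uv; rewrite -f_iso dist_edge //.
by apply: contraTneq uv => ->; rewrite e_irr.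
Qed.

Lemma hamming1_edge u v : hamming (f u) (f v) = 1 -> e u v.
Proof.
rewrite -f_iso => duv1; apply: (dist1_edge duv1).
by rewrite -duv1; apply: connect_dist_lt.
Qed.

Lemma path_hamming_le u p : path e u p -> hamming (f u) (f (last u p)) <= size p.
Proof. by rewrite -f_iso; apply: dist_path_le. Qed.

Lemma path_hamming_split u p w : path e u p -> w \in u :: p ->
  hamming (f u) (f w) + hamming (f w) (f (last u p)) <= size p.
Proof.
elim: p u => [|x p IH] u /=; first by rewrite inE => _ /eqP ->; rewrite hammingxx.
move=> /andP [ux x_path]; rewrite inE => /predU1P [->|w_in].
  by rewrite hammingxx (path_hamming_le (p := x :: p)) //= ux.
have := IH x x_path w_in; have := edge_hamming ux.
have := hamming_triangle (f u) (f x) (f w); lia.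
Qed.

Lemma geodesic_step u v : u != v ->
  exists w, e u w /\ (hamming (f w) (f v)).+1 = hamming (f u) (f v).
Proof.
move=> u_neq_v; have [p []] := dist_shortest_path (connect_dist_lt (e_conn u v)).
case: p => [_ /= vu|w p /= /andP [uw w_path] p_last p_size].
  by rewrite vu eqxx in u_neq_v.
exists w; split => //; apply/eqP; rewrite eqn_leq; apply/andP; split.
  by rewrite -(f_iso u v) -p_size ltnS -p_last -f_iso dist_path_le.
by apply: leq_trans (hamming_triangle _ (f w) _) _; rewrite edge_hamming.
Qed.

Definition embedded : pred code := fun x => [exists u, f u == x].

Lemma embedded_f u : embedded (f u).
Proof. by apply/existsP; exists u. Qed.

Lemma embeddedP x : reflect (exists u, f u = x) (embedded x).
Proof. by apply: (iffP existsP) => [[u /eqP]|[u <-]]; exists u. Qed.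

Lemma embedded_step (x y : code) : embedded x -> embedded y -> x != y ->
  exists i, x i != y i /\ embedded (flip i x).
Proof.
move=> /embeddedP [u <-] /embeddedP [v <-] fu_neq_fv.
have u_neq_v : u != v by apply: contra_neq fu_neq_fv => ->.
have [w [uw dwv]] := geodesic_step u_neq_v.
have [i fw] := hamming1_flip (edge_hamming uw).
exists i; split; last by rewrite -fw embedded_f.
apply/negP => /eqP fuv_i; move: dwv.
by rewrite fw hammingC hamming_flip_agree // hammingC; lia.
Qed.

(* Witness: the edge from [w] flipping the coordinate [i] that [xy] flips. *)
Lemma inF_flip x y w i : e x y -> f y = flip i (f x) -> embedded (flip i (f w)) ->
  inF e (x, y) w.
Proof.
move=> xy fy /embeddedP [w' fw']; apply/existsP; exists w'.
rewrite hamming1_edge ?fw' ?hamming_flip //= /theta /= !f_iso fw' fy hamming_flip2.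
have flip_sym a b : hamming (flip i a) b = hamming a (flip i b).
  by rewrite -{2}(flipK i a) hamming_flip2.
rewrite flip_sym; case: (boolP (f w i == f x i)) => [/eqP wx_i|wx_i].
  by rewrite hamming_flip_agree //; apply/eqP; lia.
by have := hamming_flip_disagree wx_i => <-; apply/eqP; lia.
Qed.

End IsometricEmbedding.

Lemma exists_addn_modn k t j : j < k -> exists r, r < k /\ (t + r) %% k = j.
Proof.
move=> j_lt_k; have k_gt0 : 0 < k by lia.
exists ((j + k - t %% k) %% k); split; first by rewrite ltn_mod.
rewrite modnDmr {1}(divn_eq t k) -addnA.
have -> : t %% k + (j + k - t %% k) = j + k by have := ltn_pmod t k_gt0; lia.
by rewrite modnMDl modnDr modn_small.
Qed.

Lemma big_nat_period (F : nat -> nat) k a : (forall i, F (i + k) = F i) ->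
  \sum_(a <= i < a + k) F i = \sum_(0 <= i < k) F i.
Proof.
move=> F_per; elim: a => [|a IHa]; first by rewrite add0n.
rewrite -IHa addSn.
have split_first : \sum_(a <= i < (a + k).+1) F i = F a + \sum_(a.+1 <= i < (a + k).+1) F i.
  by rewrite big_ltn // ltnS leq_addr.
have split_last : \sum_(a <= i < (a + k).+1) F i = \sum_(a <= i < a + k) F i + F (a + k).
  by rewrite big_nat_recr //= leq_addr.
have := F_per a; lia.
Qed.

Section Bridges.
Variables (n : nat) (V : pred {ffun 'I_n -> bool}).
Local Notation code := {ffun 'I_n -> bool}.

(* The point reached from [A] by flipping the coordinates [s 0], ..., [s t.-1] in turn. *)
Definition flipwalk (A : code) (s : nat -> 'I_n) t : code :=
  [ffun x => A x (+) odd (\sum_(0 <= i < t) (s i == x))].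

Lemma flipwalk0 A s : flipwalk A s 0 = A.
Proof. by apply/ffunP => x; rewrite ffunE big_geq // addbF. Qed.

Lemma flipwalkS A s t : flipwalk A s t.+1 = flip (s t) (flipwalk A s t).
Proof.
apply/ffunP => x; rewrite flipE !ffunE big_nat_recr //= oddD -addbA.
by rewrite [x == _]eq_sym; case: (s t == x).
Qed.

Lemma flipwalk_shift A s i r :
  flipwalk (flipwalk A s i) (fun j => s (i + j)) r = flipwalk A s (i + r).
Proof.
elim: r => [|r IHr]; first by rewrite flipwalk0 addn0.
by rewrite flipwalkS IHr addnS flipwalkS.
Qed.

Lemma eq_flipwalk A s r t : (forall i, i < t -> s i = r i) ->
  flipwalk A s t = flipwalk A r t.
Proof.
move=> eq_sr; apply/ffunP => x; rewrite !ffunE; congr (_ (+) odd _).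
by apply: eq_big_nat => i /andP [_ i_lt_t]; rewrite eq_sr.
Qed.

Lemma flipwalk_period B r k : (forall i, r (i + k) = r i) -> flipwalk B r (k + k) = B.
Proof.
move=> r_period; apply/ffunP => x; rewrite ffunE (big_cat_nat _ (n := k)) ?leq_addr //=.
by rewrite big_nat_period => [|i]; rewrite ?r_period // oddD addbb addbF.
Qed.

Definition injective_below (s : nat -> 'I_n) k :=
  forall a b, a < k -> b < k -> s a = s b -> a = b.

Lemma count_injective_below s k m j : injective_below s k -> m < k -> j <= k ->
  \sum_(0 <= i < j) (s i == s m) = (m < j).
Proof.
move=> s_inj m_lt_k; elim: j => [|j IHj] j_lt_k; first by rewrite big_geq.
rewrite big_nat_recr //= IHj ?(ltnW j_lt_k) //.
case: (eqVneq j m) => [->|j_neq_m]; first by rewrite eqxx; lia.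
have /negPf -> : s j != s m by apply: contra_neq j_neq_m; apply: s_inj.
by rewrite addn0; move/eqP: j_neq_m; lia.
Qed.

Lemma hamming_flipwalk A s k : injective_below s k -> hamming A (flipwalk A s k) = k.
Proof.
move=> s_inj; suff walk_k j : j <= k -> hamming A (flipwalk A s j) = j by apply: walk_k.
elim: j => [|j IHj] j_lt_k; first by rewrite flipwalk0 hammingxx.
rewrite flipwalkS hamming_flip_agree ?IHj ?(ltnW j_lt_k) //.
by rewrite ffunE (count_injective_below s_inj j_lt_k (ltnW j_lt_k)) ltnn addbF.
Qed.

(* A bridge is the trace in the cube of a stretch of a type-I path running from an
   edge to the next edge of the same Theta-class: consecutive coordinates never
   span a square of [V]. *)
Definition bridge A s k := [/\ injective_below s k, s k = s 0,
  forall j, j <= k.+1 -> V (flipwalk A s j) &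
  forall j, 0 < j <= k -> ~~ V (flip (s j) (flipwalk A s j.-1))].

Lemma eq_bridge A s r k : (forall i, i <= k -> s i = r i) -> bridge A s k -> bridge A r k.
Proof.
move=> eq_sr [s_inj s_k walk_in no_square]; split.
- move=> a b a_lt b_lt; rewrite -(eq_sr a) ?(ltnW a_lt) // -(eq_sr b) ?(ltnW b_lt) //.
  exact: s_inj.
- by rewrite -(eq_sr k) // -(eq_sr 0).
- move=> j j_le; rewrite -(@eq_flipwalk _ s); first exact: walk_in.
  by move=> i i_lt; apply: eq_sr; lia.
- move=> j /andP [j_gt0 j_le]; rewrite -(eq_sr j) // -(@eq_flipwalk _ s).
    by apply: no_square; rewrite j_gt0.
  by move=> i i_lt; apply: eq_sr; lia.
Qed.

Definition no_bridge_below k := forall k' A s, 0 < k' -> k' < k -> ~ bridge A s k'.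

Lemma bridge_no_shortcut k A s : no_bridge_below k -> bridge A s k ->
  forall j m, j.+2 <= m <= k -> (0 < j) || (m < k) ->
  ~~ V (flip (s m.-1) (flipwalk A s j)).
Proof.
move=> shorter [s_inj s_k walk_in no_square].
suff shortcut d j m : j + d + 2 = m -> m <= k -> (0 < j) || (m < k) ->
    ~~ V (flip (s m.-1) (flipwalk A s j)).
  by move=> j m /andP [jm m_le_k]; apply: (shortcut (m - j.+2)); lia.
elim: d j m => [|d IHd] j m jdm m_le_k jm_k.
  by have := no_square m.-1; rewrite (_ : m.-1.-1 = j); [apply; lia | lia].
(* Otherwise [flip (s m.-1)] followed by [s j], ..., [s m.-1] is a shorter bridge. *)
apply/negP => shortcut_in.
pose r i := if i is i'.+1 then s (j + i') else s m.-1.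
have walk_r i : flipwalk (flip (s m.-1) (flipwalk A s j)) r i.+1 = flipwalk A s (j + i).
  elim: i => [|i IHi]; first by rewrite flipwalkS flipwalk0 /= flipK addn0.
  by rewrite flipwalkS IHi /= addnS flipwalkS.
apply: (shorter (d + 3) (flip (s m.-1) (flipwalk A s j)) r); rewrite ?addn3 //.
  by move: jm_k; lia.
split.
- move=> [|a] [|b] a_lt b_lt //= rab; have := s_inj _ _ _ _ rab; lia.
- by rewrite /r /=; congr s; lia.
- by move=> [|i] i_le; rewrite ?flipwalk0 // walk_r; apply: walk_in; lia.
- move=> [//|[|i]] i_le /=.
    by rewrite flipwalk0 addn0 flipC -flipwalkS; apply: (IHd j.+1 m) => //; lia.
  rewrite walk_r /=; have := no_square (j + i.+1).
  by rewrite (_ : (j + i.+1).-1 = j + i); [apply; lia | lia].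
Qed.

Lemma bridge_gt2 k A s : 0 < k -> bridge A s k -> 2 < k.
Proof.
move=> k_gt0 [_ s_k walk_in no_square].
case: k k_gt0 s_k walk_in no_square => [//|[|[|//]]] _ s_k walk_in no_square.
  by have := no_square 1 isT; rewrite flipwalk0 s_k -(flipwalk0 A s) -flipwalkS walk_in.
have := no_square 1 isT; have := walk_in 3 isT.
by rewrite !flipwalkS flipwalk0 s_k flipC flipK => ->.
Qed.

(* The bridge is the stretch of the walk up to the first repeated coordinate. *)
Lemma flipwalk_injective_or_bridge A c l :
  (forall j, j <= l -> V (flipwalk A c j)) ->
  (forall m, 0 < m < l -> ~~ V (flip (c m) (flipwalk A c m.-1))) ->
  injective_below c l \/ exists i k, 0 < k /\ bridge (flipwalk A c i) (fun r => c (i + r)) k.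
Proof.
move=> walk_in no_square.
case: (boolP [exists j : 'I_l, [exists i : 'I_j, c i == c j]]) => [rep|no_rep]; [right|left].
  have has_rep : exists j, (j < l) && [exists i : 'I_j, c i == c j].
    by case/existsP: rep => j rep_j; exists j; rewrite ltn_ord.
  case: (ex_minnP has_rep) => j /andP [j_lt /existsP [[i ij] /= /eqP cij]] j_min.
  exists i, (j - i); split; first by lia.
  split.
  - move=> x y x_lt y_lt cxy; apply/eqP; apply: contraT => x_neq_y.
    wlog xy : x y x_lt y_lt cxy x_neq_y / x < y.
      move=> gen; case: (ltngtP x y) => [|yx|xy]; [exact: gen | | by rewrite xy eqxx in x_neq_y].
      by apply: (gen y x) => //; rewrite eq_sym.
    have : j <= i + y; last by lia.
    apply: j_min; apply/andP; split; first by lia.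
    have ixy : i + x < i + y by rewrite ltn_add2l.
    by apply/existsP; exists (Ordinal ixy); rewrite /= cxy.
  - by rewrite subnKC ?(ltnW ij) // addn0.
  - by move=> r r_le; rewrite flipwalk_shift; apply: walk_in; lia.
  - move=> r r_bounds; rewrite flipwalk_shift.
    by have := no_square (i + r); rewrite (_ : (i + r).-1 = i + r.-1); [apply; lia | lia].
have no_rep_lt a b : a < b < l -> c a != c b.
  move=> /andP [ab b_lt]; apply: contra no_rep => /eqP cab; apply/existsP.
  by exists (Ordinal b_lt); apply/existsP; exists (Ordinal ab); rewrite /= cab.
move=> a b a_lt b_lt cab; case: (ltngtP a b) => // [ab|ba].
  by have := no_rep_lt a b; rewrite ab b_lt cab eqxx => /(_ isT).
by have := no_rep_lt b a; rewrite ba a_lt cab eqxx => /(_ isT).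
Qed.

Hypothesis V_step : forall x y, V x -> V y -> x != y ->
  exists i, x i != y i /\ V (flip i x).

Lemma bridge_end k A s m : bridge A s k -> m < k ->
  flipwalk A s k.+1 (s m) = A (s m) (+) (m != 0).
Proof.
move=> [s_inj s_k _ _] m_lt_k; rewrite ffunE big_nat_recr //=.
rewrite (count_injective_below s_inj m_lt_k (leqnn k)) m_lt_k s_k.
case: (eqVneq m 0) => [->|m_neq0]; first by rewrite eqxx.
have /negPf -> // : s 0 != s m.
by apply: contra_neq m_neq0 => s0m; symmetry; apply: s_inj s0m; lia.
Qed.

Lemma flipwalk_flipped A s t x : flipwalk A s t x != A x -> exists2 i, i < t & s i = x.
Proof.
rewrite ffunE; case: (eqVneq (\sum_(0 <= i < t) (s i == x)) 0) => [->|]; first by rewrite addbF eqxx.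
rewrite sum_nat_seq_neq0 => /hasP [i]; rewrite mem_index_iota eqb0 negbK.
by move=> /andP [_ i_lt] /eqP s_i _; exists i.
Qed.

(* A geodesic step from [A] towards the end of the walk must flip [s k.-1]:
   flipping any other [s m] would be a shortcut. *)
Lemma bridge_flip_last_in k A s : 2 < k -> no_bridge_below k -> bridge A s k ->
  V (flip (s k.-1) A).
Proof.
move=> k_gt2 shorter bridgeAs; have no_shortcut := bridge_no_shortcut shorter bridgeAs.
have [_ s_k walk_in _] := bridgeAs.
have A_in : V A by have := walk_in 0; rewrite flipwalk0; apply.
have end_in : V (flipwalk A s k.+1) by apply: walk_in.
have A_neq_end : A != flipwalk A s k.+1.
  apply/negP => /eqP/ffunP/(_ (s k.-1)); rewrite (bridge_end bridgeAs); last by lia.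
  have -> : (k.-1 != 0) = true by lia.
  by case: (A _).
have [y [Ay_neq step_in]] := V_step A_in end_in A_neq_end.
have [m [m_lt_k s_m]] : exists m, m < k /\ s m = y.
  rewrite eq_sym in Ay_neq; have [i i_le s_i] := flipwalk_flipped Ay_neq.
  case: (ltngtP i k) => i_k; [by exists i | lia | exists 0].
  by rewrite -s_i i_k s_k; split => //; lia.
rewrite -s_m in Ay_neq step_in.
have m_gt0 : 0 < m.
  by rewrite lt0n; apply: contraNneq Ay_neq => m0; rewrite (bridge_end bridgeAs) // m0 addbF.
case: (ltngtP m k.-1) => [m_lt|m_gt|m_k]; [|lia|by rewrite -m_k].
have /negP[] := no_shortcut 0 m.+1 ltac:(lia) ltac:(lia).
by rewrite flipwalk0.
Qed.

Lemma bridge_rotate k A s : 2 < k -> no_bridge_below k -> bridge A s k ->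
  bridge (flip (s k.-1) A) (fun i => if i is i'.+1 then s i' else s k.-1) k.
Proof.
move=> k_gt2 shorter bridgeAs; have no_shortcut := bridge_no_shortcut shorter bridgeAs.
have [s_inj s_k walk_in no_square] := bridgeAs.
set r := fun i => if i is i'.+1 then s i' else s k.-1.
have walk_r i : flipwalk (flip (s k.-1) A) r i.+1 = flipwalk A s i.
  elim: i => [|i IHi]; first by rewrite flipwalkS !flipwalk0 /r flipK.
  by rewrite flipwalkS IHi [in RHS]flipwalkS.
split.
- move=> [|a] [|b] a_lt b_lt //= rab; have := s_inj _ _ _ _ rab; lia.
- by rewrite /r; case: (k) k_gt2.
- move=> [|j] j_le; first by rewrite flipwalk0; apply: bridge_flip_last_in.
  by rewrite walk_r; apply: walk_in; lia.
- move=> [//|[|j]] j_le /=; last by rewrite walk_r; apply: no_square; lia.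
  rewrite flipwalk0 flipC.
  by have := no_shortcut 1 k; rewrite flipwalkS flipwalk0; apply; lia.
Qed.

Section BridgeCycle.
Variables (k : nat) (A : code) (s : nat -> 'I_n).
Hypothesis k_gt2 : 2 < k.
Hypothesis shorter : no_bridge_below k.
Hypothesis bridgeAs : bridge A s k.

Let k_gt0 : 0 < k := ltnW (ltnW k_gt2).
Let sp i := s (i %% k).

Let sp_period i : sp (i + k) = sp i.
Proof. by rewrite /sp modnDr. Qed.

Let sp_inj a b : sp a = sp b -> a %% k = b %% k.
Proof. by case: bridgeAs => s_inj _ _ _ /s_inj; apply; rewrite ltn_mod. Qed.

(* Repeating the coordinates of the bridge periodically closes its walk into a
   cycle of length [2k]. *)
Definition bridge_cycle t := flipwalk A (fun i => s (i %% k)) t.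
Local Notation W := bridge_cycle.

Lemma bridge_cycleS t : W t.+1 = flip (sp t) (W t).
Proof. exact: flipwalkS. Qed.

Lemma bridge_cycle_period t : W (t + k + k) = W t.
Proof.
rewrite /W -addnA -flipwalk_shift flipwalk_period // => i.
by rewrite addnA modnDr.
Qed.

Lemma bridge_cycle_closed : W (k + k) = W 0.
Proof. by rewrite -{1}(add0n k) bridge_cycle_period. Qed.

Lemma bridge_cycle_window t : t <= k + k -> bridge (W t) (fun i => sp (t + i)) k.
Proof.
have window0 : bridge (W 0) (fun i => sp (0 + i)) k.
  rewrite /W flipwalk0; apply: eq_bridge bridgeAs => i i_le; rewrite add0n /sp.
  case: (ltngtP i k) => i_k; [by rewrite modn_small | lia | by rewrite i_k modnn; case: bridgeAs].
have window_last : bridge (W (k + k)) (fun i => sp (k + k + i)) k.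
  rewrite bridge_cycle_closed; apply: eq_bridge window0 => i _.
  by rewrite add0n addnC addnA sp_period sp_period.
have window_pred u : bridge (W u.+1) (fun i => sp (u.+1 + i)) k ->
    bridge (W u) (fun i => sp (u + i)) k.
  move=> /(bridge_rotate k_gt2 shorter).
  rewrite (_ : u.+1 + k.-1 = u + k); last by lia.
  rewrite sp_period bridge_cycleS flipK; apply: eq_bridge => -[|i] _ /=.
    by rewrite addn0.
  by rewrite addnS.
move=> t_le; move: {2}(k + k - t) (erefl (k + k - t)) => d.
elim: d t t_le => [|d IHd] t t_le d_eq.
  by rewrite (_ : t = k + k); [exact: window_last | lia].
by apply: window_pred; apply: IHd; lia.
Qed.

Lemma bridge_cycle_in t : t <= k + k -> V (W t).
Proof.
by move=> /bridge_cycle_window [_ _ walk_in _]; have := walk_in 0 isT; rewrite flipwalk0.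
Qed.

Definition unflipped (x : 'I_n) := [forall j : 'I_k, s j != x].

Lemma bridge_cycle_unflipped t x : unflipped x -> W t x = A x.
Proof.
move=> /forallP s_neq; rewrite /W ffunE big_nat_cond big1 ?addbF // => i _.
by rewrite (negbTE (s_neq (Ordinal (ltn_pmod i k_gt0)))).
Qed.

Lemma flipped_bridge x : ~~ unflipped x -> exists j, j < k /\ s j = x.
Proof. by rewrite negb_forall => /existsP [j /negPn /eqP s_j]; exists j. Qed.

Lemma hamming_bridge_cycle a d : d <= k -> hamming (W a) (W (a + d)) = d.
Proof.
move=> d_le_k; rewrite /W -flipwalk_shift hamming_flipwalk // => x y x_lt y_lt.
by move=> /sp_inj/eqP; rewrite eqn_modDl !modn_small => [/eqP| |]; lia.
Qed.

Lemma bridge_cycle_inj a b : a < k + k -> b < k + k -> W a = W b -> a = b.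
Proof.
wlog a_le_b : a b / a <= b.
  move=> gen a_lt b_lt Wab; case: (leqP a b) => [|/ltnW] ab; first exact: gen.
  by symmetry; apply: gen.
move=> a_lt b_lt Wab; case: (leqP (b - a) k) => ba.
  by have := hamming_bridge_cycle a ba; rewrite subnKC // Wab hammingxx; lia.
have ab_le : a + k + k - b <= k by lia.
have := hamming_bridge_cycle b ab_le; rewrite subnKC; last by lia.
by rewrite bridge_cycle_period Wab hammingxx; lia.
Qed.

Lemma bridge_cycle_neighbour t j : 0 < t <= k + k -> j < k -> V (flip (s j) (W t)) ->
  flip (s j) (W t) = W t.+1 \/ flip (s j) (W t) = W t.-1.
Proof.
move=> /andP [t_gt0 t_le] j_lt_k.
have no_shortcut := bridge_no_shortcut shorter (bridge_cycle_window t_le).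
have [r [r_lt_k t_r]] := exists_addn_modn t j_lt_k.
have -> : s j = sp (t + r) by rewrite /sp t_r.
case: (eqVneq r 0) => [-> _|r_neq0 flip_in]; first by left; rewrite addn0 bridge_cycleS.
case: (eqVneq r k.-1) => [r_k|r_neq_k].
  right; rewrite (_ : t + r = t.-1 + k); last by lia.
  by rewrite sp_period -{2}(prednK t_gt0) bridge_cycleS flipK.
have /negP[] := no_shortcut 0 r.+1 ltac:(lia) ltac:(lia).
by rewrite flipwalk0.
Qed.

Lemma bridge_cycle_neighbour_index a j : a < k + k -> j < k -> V (flip (s j) (W a)) ->
  exists b, [/\ b < k + k, flip (s j) (W a) = W b &
                (b == a.+1 %% (k + k)) || (a == b.+1 %% (k + k))].
Proof.
move=> a_lt j_lt_k; case: (posnP a) => [->|a_gt0].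
  rewrite -bridge_cycle_closed => /(bridge_cycle_neighbour _ j_lt_k) [| ->|->]; first by lia.
    exists 1; rewrite modn_small; last by lia.
    by rewrite (_ : (k + k).+1 = 1 + k + k) ?bridge_cycle_period //; split => //; lia.
  exists (k + k).-1; split; [lia | by [] | by rewrite prednK ?modnn ?eqxx ?orbT //; lia].
move=> /(bridge_cycle_neighbour _ j_lt_k) [| ->|->]; first by lia.
  case: (ltngtP a.+1 (k + k)) => a_k; first by exists a.+1; rewrite modn_small // eqxx.
    by lia.
  by exists 0; rewrite a_k bridge_cycle_closed modnn; split => //; lia.
exists a.-1; split; [lia | by [] | by rewrite (prednK a_gt0) (modn_small a_lt) eqxx orbT].
Qed.

Lemma bridge_cycle_hull z : V z -> (forall x, unflipped x -> z x = A x) ->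
  exists2 b, b < k + k & z = W b.
Proof.
move hz : (hamming (W 0) z) => h; elim: h z hz => [|h IHh] z hz z_in z_off.
  by exists 0; [lia | apply/eqP; rewrite eq_sym -hamming_eq0 hz].
have z_neq : z != W 0 by apply/eqP => zW; move: hz; rewrite zW hammingxx.
have [i [zi_neq step_in]] := V_step z_in (bridge_cycle_in (leq0n _)) z_neq.
have i_flipped : ~~ unflipped i.
  by apply: contra zi_neq => i_off; rewrite z_off // bridge_cycle_unflipped.
have [j [j_lt_k s_j]] := flipped_bridge i_flipped.
have step_h : hamming (W 0) (flip i z) = h.
  have /hamming_flip_disagree : W 0 i != z i by rewrite eq_sym.
  by rewrite hz => -[].
have step_off x : unflipped x -> flip i z x = A x.
  move=> x_off; rewrite flipE z_off //; case: (eqVneq x i) => [x_i|]; last by rewrite addbF.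
  by move: i_flipped; rewrite -x_i x_off.
have [b b_lt zb] := IHh _ step_h step_in step_off.
have z_flip : z = flip (s j) (W b) by rewrite -zb s_j flipK.
rewrite z_flip in z_in *.
by have [b' [b'_lt -> _]] := bridge_cycle_neighbour_index b_lt j_lt_k z_in; exists b'.
Qed.

Lemma bridge_cycle_adjacent a b : a < k + k -> b < k + k -> hamming (W a) (W b) = 1 ->
  (b == a.+1 %% (k + k)) || (a == b.+1 %% (k + k)).
Proof.
move=> a_lt b_lt /hamming1_flip [i Wb].
have /flipped_bridge [j [j_lt_k s_j]] : ~~ unflipped i.
  apply/negP => i_off; have := bridge_cycle_unflipped b i_off.
  by rewrite Wb flipE bridge_cycle_unflipped // eqxx; case: (A i).
have flip_in : V (flip (s j) (W a)) by rewrite s_j -Wb; apply: bridge_cycle_in; lia.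
have [b' [b'_lt Wb' ab']] := bridge_cycle_neighbour_index a_lt j_lt_k flip_in.
by rewrite s_j -Wb in Wb'; rewrite (bridge_cycle_inj b_lt b'_lt Wb').
Qed.

End BridgeCycle.

End Bridges.

Lemma path_map_iota (T : Type) (e : rel T) (g : nat -> T) a m :
  (forall t, a <= t < a + m -> e (g t) (g t.+1)) -> path e (g a) (map g (iota a.+1 m)).
Proof.
elim: m a => [//|m IHm] a g_edge /=; rewrite g_edge ?IHm //; last by lia.
by move=> t t_bounds; apply: g_edge; lia.
Qed.

Lemma cycle_map_iota (T : Type) (e : rel T) (g : nat -> T) N :
  g N = g 0 -> (forall t, t < N -> e (g t) (g t.+1)) -> cycle e (map g (iota 0 N)).
Proof.
case: N => [//|N] g_closed g_edge; rewrite /= -{2}g_closed -map_rcons -cats1.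
rewrite -[[:: N.+1]]/(iota (1 + N) 1) -iotaD addn1.
by apply: path_map_iota => t /andP [_ t_lt]; apply: g_edge.
Qed.

Lemma next_map_iota (T : eqType) (g : nat -> T) N a : a < N -> uniq (map g (iota 0 N)) ->
  next (map g (iota 0 N)) (g a) = g (a.+1 %% N).
Proof.
move=> a_lt g_uniq; have a_in : g a \in map g (iota 0 N) by apply: map_f; rewrite mem_iota.
rewrite next_nth a_in; case: N a_lt g_uniq a_in => [//|N] a_lt g_uniq _.
have -> : index (g a) (map g (iota 0 N.+1)) = a.
  have := @index_uniq _ (g 0) a (map g (iota 0 N.+1)); rewrite size_map size_iota.
  by rewrite (nth_map 0) ?size_iota // nth_iota // add0n => ->.
case: (ltngtP a N) => [a_lt_N|a_gt_N|->]; [|lia|].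
  by rewrite /= (nth_map 0) ?size_iota // nth_iota // modn_small.
by rewrite /= nth_default ?size_map ?size_iota // modnn.
Qed.

Section ConvexBridgeCycle.
Variables (T : finType) (e : rel T) (n : nat) (f : T -> {ffun 'I_n -> bool}).
Hypothesis e_irr : irreflexive e.
Hypothesis e_conn : connected e.
Hypothesis f_iso : forall u v, dist e u v = hamming (f u) (f v).
Variables (k : nat) (A : {ffun 'I_n -> bool}) (s : nat -> 'I_n) (d : T).
Hypothesis k_gt2 : 2 < k.
Hypothesis shorter : no_bridge_below (embedded f) k.
Hypothesis bridgeAs : bridge (embedded f) A s k.

Let V_step := embedded_step e_irr e_conn f_iso.
Local Notation W := (bridge_cycle k A s).

(* [d] is a junk default: every point of the cycle does have a preimage. *)
Definition bridge_cycle_vertex t := odflt d [pick u | f u == W t].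
Local Notation vertex := bridge_cycle_vertex.
Definition bridge_cycle_vertices := map vertex (iota 0 (k + k)).
Local Notation vertices := bridge_cycle_vertices.

Lemma bridge_cycle_vertexE t : t <= k + k -> f (vertex t) = W t.
Proof.
move=> t_le; have /embeddedP [u fu] := bridge_cycle_in V_step k_gt2 shorter bridgeAs t_le.
rewrite /bridge_cycle_vertex; case: pickP => [v /eqP //|none].
by have := none u; rewrite /= fu eqxx.
Qed.

Lemma mem_bridge_cycle_vertices w : w \in vertices -> exists2 a, a < k + k & w = vertex a.
Proof. by move=> /mapP [a]; rewrite mem_iota add0n => a_lt ->; exists a. Qed.

Lemma bridge_cycle_vertices_uniq : uniq vertices.
Proof.
rewrite map_inj_in_uniq ?iota_uniq // => a b; rewrite !mem_iota !add0n => a_lt b_lt fab.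
apply: (bridge_cycle_inj k_gt2 bridgeAs a_lt b_lt).
by rewrite -!bridge_cycle_vertexE ?fab //; lia.
Qed.

Lemma bridge_cycle_vertices_cycle : is_cycle e vertices.
Proof.
split; [exact: bridge_cycle_vertices_uniq | by rewrite size_map size_iota; lia |].
apply: cycle_map_iota => [|t t_lt].
  by rewrite /bridge_cycle_vertex bridge_cycle_closed.
apply: (hamming1_edge e_conn f_iso); rewrite !bridge_cycle_vertexE; try lia.
by rewrite bridge_cycleS hamming_flip.
Qed.

Lemma bridge_cycle_vertices_geodesic u v p : u \in vertices -> v \in vertices ->
  shortest_path e u p v -> all (mem vertices) (u :: p).
Proof.
move=> /mem_bridge_cycle_vertices [a a_lt ->] /mem_bridge_cycle_vertices [b b_lt ->].
move=> [p_path [p_last p_size]].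
have unflipped_vertex t x : t <= k + k -> unflipped k s x -> f (vertex t) x = A x.
  by move=> t_le x_off; rewrite bridge_cycle_vertexE // bridge_cycle_unflipped.
apply/allP => w w_in; have := path_hamming_split e_irr f_iso p_path w_in.
rewrite p_last p_size f_iso => w_between.
(* [w] lies between two cycle vertices, so it agrees with them off the bridge coordinates. *)
have w_unflipped x : unflipped k s x -> f w x = A x.
  move=> x_off; apply/eqP; apply: contraT => wx_neq.
  have ab_x : f (vertex a) x = f (vertex b) x by rewrite !unflipped_vertex //; lia.
  have wa_x : f w x != f (vertex a) x by rewrite unflipped_vertex //; lia.
  by have := hamming_detour ab_x wa_x; lia.
have [c c_lt fw] := bridge_cycle_hull V_step k_gt2 shorter bridgeAs (embedded_f f w) w_unflipped.
have -> : w = vertex c by apply: (isometry_inj f_iso); rewrite bridge_cycle_vertexE //; lia.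
by apply: map_f; rewrite mem_iota.
Qed.

Lemma bridge_cycle_vertices_edge x y : x \in vertices -> y \in vertices -> e x y ->
  cycle_edge vertices x y.
Proof.
move=> x_in y_in xy; rewrite /cycle_edge x_in y_in /=.
move: x_in y_in => /mem_bridge_cycle_vertices [a a_lt xa] /mem_bridge_cycle_vertices [b b_lt yb].
have ab1 : hamming (W a) (W b) = 1.
  by rewrite -!bridge_cycle_vertexE -?xa -?yb ?(edge_hamming e_irr f_iso xy) //; lia.
have := bridge_cycle_adjacent V_step k_gt2 shorter bridgeAs a_lt b_lt ab1.
have uniq_vertices := bridge_cycle_vertices_uniq.
by rewrite xa yb !next_map_iota //; case/orP => /eqP ->; rewrite eqxx ?orbT.
Qed.

Lemma bridge_cycle_convex : convex_cycle e vertices.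
Proof.
split; first exact: bridge_cycle_vertices_cycle.
move=> u v p u_in v_in uv_short; have p_in := bridge_cycle_vertices_geodesic u_in v_in uv_short.
split => //; case: uv_short => p_path _; apply: sub_in_path p_in p_path.
by move=> x y x_in y_in; apply: bridge_cycle_vertices_edge.
Qed.

End ConvexBridgeCycle.

Theorem no_bridge (T : finType) (e : rel T) n (f : T -> {ffun 'I_n -> bool}) :
  irreflexive e -> connected e -> (forall u v, dist e u v = hamming (f u) (f v)) ->
  (forall c, convex_cycle e c -> size c = 4) ->
  forall k A s, 0 < k -> ~ bridge (embedded f) A s k.
Proof.
move=> e_irr e_conn f_iso convex4; elim/ltn_ind => k IHk A s k_gt0 bridgeAs.
have k_gt2 := bridge_gt2 k_gt0 bridgeAs.
have shorter : no_bridge_below (embedded f) k by move=> k' A' s' k'_gt0 /IHk; apply.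
have [_ _ walk_in _] := bridgeAs.
have /embeddedP [d _] : embedded f A by have := walk_in 0 isT; rewrite flipwalk0.
have := convex4 _ (bridge_cycle_convex e_irr e_conn f_iso d k_gt2 shorter bridgeAs).
by rewrite size_map size_iota; lia.
Qed.

Section TypeIPath.
Variables (T : finType) (e : rel T) (n : nat) (f : T -> {ffun 'I_n -> bool}).
Hypothesis e_irr : irreflexive e.
Hypothesis e_conn : connected e.
Hypothesis f_iso : forall u v, dist e u v = hamming (f u) (f v).

Lemma path_flipwalk u p : 0 < size p -> path e u p ->
  exists c, forall i, i <= size p -> f (nth u (u :: p) i) = flipwalk (f u) c i.
Proof.
elim: p u => [//|x p IHp] u _ /= /andP [ux x_path].
have [i0 fx] := hamming1_flip (edge_hamming e_irr f_iso ux).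
case: p IHp x_path => [|y p] IHp x_path.
  by exists (fun=> i0) => -[|[|//]] _; rewrite ?flipwalkS flipwalk0.
have [c walk_c] := IHp x isT x_path.
exists (fun i => if i is i'.+1 then c i' else i0) => -[|i] i_le; first by rewrite flipwalk0.
have -> : nth u [:: u, x, y & p] i.+1 = nth x [:: x, y & p] i by apply: set_nth_default.
rewrite walk_c // -[i.+1 in RHS]add1n -flipwalk_shift flipwalkS flipwalk0 -fx.
by apply: eq_flipwalk => j _; rewrite add1n.
Qed.

Lemma typeI_no_square v0 p c : path e v0 p -> typeI e v0 p ->
  (forall i, i <= size p -> f (nth v0 (v0 :: p) i) = flipwalk (f v0) c i) ->
  forall m, 0 < m < size p -> ~~ embedded f (flip (c m) (flipwalk (f v0) c m.-1)).
Proof.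
move=> p_path [_ _ interior] walk_c m m_bounds; apply/negP => square.
have [/negP[]] := interior m ltac:(lia).
apply: (inF_flip e_conn f_iso (i := c m)).
- by move/(pathP v0): p_path; apply; lia.
- by rewrite !walk_c ?flipwalkS //; lia.
- by rewrite walk_c //; lia.
Qed.

End TypeIPath.

Theorem mainTheorem5 (T : finType) (e : rel T) :
  symmetric e -> irreflexive e -> partial_cube e ->
  (forall c : seq T, convex_cycle e c -> size c = 4) ->
  forall (v0 : T) (p : seq T),
    1 <= size p -> path e v0 p -> uniq (v0 :: p) ->
    typeI e v0 p ->
    shortest_path e v0 p (last v0 p).
Proof.
move=> _ e_irr [e_conn [n [f f_dist]]] convex4 v0 p p_gt0 p_path _ typeI_p.
have f_iso u v : dist e u v = hamming (f u) (f v) by rewrite f_dist dist_qadj.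
have [c walk_c] := path_flipwalk e_irr f_iso p_gt0 p_path.
have walk_in j : j <= size p -> embedded f (flipwalk (f v0) c j).
  by move=> j_le; rewrite -walk_c ?embedded_f.
have no_square := typeI_no_square e_conn f_iso p_path typeI_p walk_c.
case: (flipwalk_injective_or_bridge walk_in no_square) => [c_inj|[i [k [k_gt0 bridge_ik]]]].
  have last_p : last v0 p = nth v0 (v0 :: p) (size p) by rewrite -[LHS](nth_last v0 (v0 :: p)).
  by split => //; split => //; rewrite last_p f_iso (walk_c (size p)) // hamming_flipwalk.
by case: (no_bridge e_irr e_conn f_iso convex4 k_gt0 bridge_ik).
Qed.
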